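(* Let $S,T\subseteq\mathbb{Z}_{>0}$ be finite with $T\preceq S$, and let $x\in T$ be such that $T\setminus\{x\}\preceq S$. Then $(T\triangleleft S)(i)\ge((T\setminus\{x\})\triangleleft S)(i)$ for all $i\in[|S|]$.
   Context: For a finite set $S\subseteq\mathbb{Z}_{>0}$, $S(i)$ denotes its $i$th smallest element. $T\preceq S$ means $|T|\ge|S|$ and $T(i)<S(i)$ for all $i\in[|S|]$. For finite $S,T$, $T\triangleleft S$ is computed by going through $S$ from largest to smallest; each $s$ picks the largest element of $T$ less than $s$ not yet picked (if one exists); $T\triangleleft S$ is the set of picked elements. *)

From mathcomp Require Import all_boot.
From mathcomp Require Import finmap.
Set Implicit Arguments. Unset Strict Implicit. Unset Printing Implicit Defensive.
Local Open Scope fset_scope.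

(* S(i): the i-th smallest element of S, 1-indexed (i in 1..|S|). *)
Definition elt (S : {fset nat}) (i : nat) : nat := nth 0 (sort leq S) i.-1.

Definition preceq (T S : {fset nat}) : Prop :=
  #|` S| <= #|` T| /\ forall i, 1 <= i <= #|` S| -> elt T i < elt S i.

Definition pick_lt (avail : seq nat) (s : nat) : option nat :=
  let c := [seq t <- avail | t < s] in
  if c is [::] then None else Some (\max_(t <- c) t).

(* ss is traversed in the given order; avail = not yet picked elements of T *)
Fixpoint tri_rec (avail : seq nat) (ss : seq nat) : seq nat :=
  match ss with
  | [::] => [::]
  | s :: ss' =>
      match pick_lt avail s with
      | Some t => t :: tri_rec (rem t avail) ss'
      | None => tri_rec avail ss'
      end
  end.

Definition tri (T S : {fset nat}) : {fset nat} :=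
  seq_fset tt (tri_rec T (rev (sort leq S))).

From mathcomp Require Import all_boot.
From mathcomp Require Import finmap.
Set Implicit Arguments. Unset Strict Implicit. Unset Printing Implicit Defensive.
Local Open Scope fset_scope.

(* Adding an element y to the pool of the greedy matching either adds y to
   the picked elements, or makes y replace some picked element z <= y
   (tri_rec_cons).  Since T \ x ⪯ S, a Hall-type counting argument shows that
   the greedy run on T \ x already picks |S| elements, so the first
   alternative is impossible for the pool T: the picks of T are those of
   T \ x with some z replaced by x >= z, and such a replacement can only
   increase every order statistic. *)

Lemma bigmax_seq_mem (c : seq nat) : c != [::] -> \max_(t <- c) t \in c.
Proof.
elim: c => // a [|b c] IH _; first by rewrite big_seq1 mem_seq1.
by rewrite big_cons inE /maxn; case: ltnP => _; rewrite ?IH ?orbT ?eqxx.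
Qed.

Variant pick_lt_spec (A : seq nat) (s : nat) : option nat -> Prop :=
  | PickLtSome a of a \in A & a < s & (forall t, t \in A -> t < s -> t <= a) :
      pick_lt_spec A s (Some a)
  | PickLtNone of (forall t, t \in A -> s <= t) : pick_lt_spec A s None.

Lemma pick_ltP A s : pick_lt_spec A s (pick_lt A s).
Proof.
rewrite /pick_lt; case E: [seq t <- A | t < s] => [|b c].
  constructor=> t tA; rewrite leqNgt; apply/negP => ts.
  by have := mem_filter (fun t => t < s) t A; rewrite E ts tA.
have /bigmax_seq_mem : [seq t <- A | t < s] != [::] by rewrite E.
rewrite -E mem_filter => /andP [ms mA]; constructor=> // t tA ts.
by apply: (leq_bigmax_seq (F := id)); rewrite // mem_filter ts.
Qed.

Lemma eq_pick_lt s A A' : A =i A' -> pick_lt A s = pick_lt A' s.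
Proof.
move=> eqA; case: (pick_ltP A s) => [a aA a_s amax|Age];
  case: (pick_ltP A' s) => [b bA b_s bmax|A'ge] //.
- by congr Some; apply/eqP; rewrite eqn_leq amax ?eqA // bmax -?eqA.
- by have := A'ge a; rewrite -eqA leqNgt a_s => /(_ aA).
- by have := Age b; rewrite eqA leqNgt b_s => /(_ bA).
Qed.

Lemma perm_rem (T : eqType) (x : T) (s1 s2 : seq T) :
  perm_eq s1 s2 -> perm_eq (rem x s1) (rem x s2).
Proof.
move=> eq12; have [xs1|xs1] := boolP (x \in s1); last first.
  by rewrite !rem_id -?(perm_mem eq12).
have xs2 : x \in s2 by rewrite -(perm_mem eq12).
rewrite -(perm_cons x) -(permPl (perm_to_rem xs1)).
exact: perm_trans eq12 (perm_to_rem xs2).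
Qed.

Lemma perm_tri_rec A A' ss : perm_eq A A' -> tri_rec A ss = tri_rec A' ss.
Proof.
elim: ss A A' => //= s ss IH A A' eqAA'.
rewrite (eq_pick_lt s (perm_mem eqAA')); case: pick_lt => [t|]; last exact: IH.
by rewrite (IH _ (rem t A')) // perm_rem.
Qed.

Lemma tri_rec_sub A ss : {subset tri_rec A ss <= A}.
Proof.
elim: ss A => //= s ss IH A; case: pick_ltP => [a aA _ _|_]; last exact: IH.
by move=> t; rewrite inE => /predU1P [->|/IH/mem_rem].
Qed.

Lemma uniq_tri_rec A ss : uniq A -> uniq (tri_rec A ss).
Proof.
elim: ss A => //= s ss IH A uA; case: pick_ltP => [a _ _ _|_]; last exact: IH.
rewrite /= IH ?rem_uniq // andbT.
by apply/negP => /tri_rec_sub; rewrite mem_rem_uniqF.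
Qed.

Lemma size_tri_rec_leq A ss : size (tri_rec A ss) <= size ss.
Proof.
elim: ss A => //= s ss IH A.
by case: pick_lt => [t|]; [exact: IH | exact: leqW].
Qed.

Lemma tri_rec_cons ss y B :
  (exists2 z, z <= y & perm_eq (y :: tri_rec B ss) (z :: tri_rec (y :: B) ss))
  \/ perm_eq (tri_rec (y :: B) ss) (y :: tri_rec B ss).
Proof.
have swap u v w : perm_eql (u :: v :: w) (v :: u :: w) := perm_catCA [:: u] [:: v] w.
elim: ss y B => [|s ss IH] y B /=; first by left; exists y.
case: (pick_ltP B s) => [b bB b_s bmax|Bge];
  case: (pick_ltP (y :: B) s) => [a aA a_s amax|yBge].
- have ba : b <= a by apply: amax; rewrite ?inE ?bB ?orbT.
  have [eab|nab] := eqVneq a b.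
    subst a; have remB : perm_eq (rem b (y :: B)) (y :: rem b B).
      by rewrite /=; case: eqVneq => [->|//]; apply: perm_to_rem.
    rewrite (perm_tri_rec _ remB).
    case: (IH y (rem b B)) => [[z zy exch]|grow]; [left; exists z => //|right].
      by rewrite swap perm_sym swap perm_cons perm_sym.
    by rewrite perm_sym swap perm_cons perm_sym.
  have ay : a = y.
    move: aA; rewrite inE => /predU1P [//|aB].
    by case/negP: nab; rewrite eqn_leq ba bmax.
  (* s takes y instead of b, so b is the extra element of the remaining run. *)
  subst a; rewrite /= eqxx (perm_tri_rec _ (perm_to_rem bB)).
  case: (IH b (rem b B)) => [[z zb exch]|grow]; [left; exists z|right].
  + exact: leq_trans zb ba.
  + by rewrite perm_sym swap perm_cons perm_sym.
  + by rewrite perm_cons.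
- by have := yBge b; rewrite inE bB orbT leqNgt b_s => /(_ isT).
- have ay : a = y.
    move: aA; rewrite inE => /predU1P [//|aB].
    by have := Bge a aB; rewrite leqNgt a_s.
  by subst a; right; rewrite /= eqxx.
- exact: IH.
Qed.

Lemma count_sorted_down_closed (P : pred nat) (s : seq nat) k :
  (forall m n, m <= n -> P n -> P m) -> sorted leq s ->
  (k < count P s) = (k < size s) && P (nth 0 s k).
Proof.
move=> Pdown; elim: s k => //= a s IH k /[dup] /path_sorted srt.
move=> /(order_path_min leq_trans) /allP ge_a.
have [Pa|nPa] := boolP (P a).
  by case: k => [|k]; rewrite /= ?Pa // add1n ltnS IH.
have nP t : t \in s -> P t = false.
  by move=> ts; apply: contraNF nPa; apply: Pdown (ge_a t ts).
rewrite add0n (eq_in_count (a2 := pred0) nP) count_pred0.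
case: k => [|k] /=; first by rewrite (negbTE nPa).
by rewrite ltnS; case: (ltnP k (size s)) => ks //=; rewrite nP ?mem_nth.
Qed.

Lemma nth_sort_exchange (A B : seq nat) y z i :
  z <= y -> perm_eq (y :: B) (z :: A) ->
  nth 0 (sort leq B) i <= nth 0 (sort leq A) i.
Proof.
move=> zy eqBA; have sizeBA : size B = size A by have [] := perm_size eqBA.
have [iA|iA] := ltnP i (size A); last by rewrite !nth_default ?size_sort ?sizeBA.
set v := nth 0 (sort leq A) i.
have cnt s :
    (i < count (fun t => t <= v) s) = (i < size s) && (nth 0 (sort leq s) i <= v).
  rewrite -(count_sort leq) count_sorted_down_closed ?size_sort
    ?(sort_sorted leq_total) //.
  by move=> m n; apply: leq_trans.
have cntA : i < count (fun t => t <= v) A by rewrite cnt iA leqnn.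
have cntBA : count (fun t => t <= v) A <= count (fun t => t <= v) B.
  have /= := permP eqBA (fun t => t <= v).
  case: (leqP y v) => [yv|_]; first by rewrite (leq_trans zy yv) => /addnI ->.
  by rewrite add0n => ->; apply: leq_addl.
by have := leq_trans cntA cntBA; rewrite cnt => /andP [].
Qed.

Lemma size_tri_rec_rev_sorted (A s : seq nat) :
  sorted leq s -> (forall k, k < size s -> k < count (fun t => t < nth 0 s k) A) ->
  size (tri_rec A (rev s)) = size s.
Proof.
elim/last_ind: s A => //= s a IH A srt hall.
have le_a k : k < size s -> nth 0 s k <= a.
  move=> ks; have := sorted_leq_nth leq_trans leqnn 0 srt.
  move=> /(_ k (size s)); rewrite !nth_rcons ks ltnn eqxx !inE size_rcons ltnS.
  by apply; rewrite ?(ltnW ks).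
have := hall (size s); rewrite size_rcons nth_rcons ltnn eqxx => /(_ (ltnSn _)) hall_a.
rewrite rev_rcons /=; case: pick_ltP => [t tA ta tmax|Age]; last first.
  have /hasP [u /Age] : has (fun u => u < a) A.
    by rewrite has_count (leq_ltn_trans _ hall_a).
  by rewrite leqNgt => /negP.
congr S; apply: IH => [|k ks].
  exact: (subseq_sorted leq_trans (subseq_rcons s a)).
have := hall k; rewrite size_rcons nth_rcons ks ltnS => /(_ (ltnW ks)) hall_k.
set b := nth 0 s k in hall_k *.
have /permP /(_ (fun u => u < b)) /= := perm_to_rem tA.
(* Removing t lowers the count below b only if t < b; then, t being the
   largest element of A below a, the counts below b and below a agree. *)
have [tb|bt] := ltnP t b; last by rewrite add0n => <-.
have -> : count (fun u => u < b) A = count (fun u => u < a) A.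
  apply: eq_in_count => u uA /=; apply/idP/idP => [ub|ua].
    exact: leq_trans ub (le_a k ks).
  exact: leq_ltn_trans (tmax u uA ua) tb.
by move=> eq_a; move: hall_a; rewrite eq_a add1n ltnS; apply: leq_trans.
Qed.

Lemma size_tri_rec_preceq (T S : {fset nat}) :
  preceq T S -> size (tri_rec T (rev (sort leq S))) = #|` S|.
Proof.
case=> cardST ltTS.
rewrite size_tri_rec_rev_sorted ?size_sort ?(sort_sorted leq_total) // => k kS.
rewrite -(count_sort leq) count_sorted_down_closed ?(sort_sorted leq_total) //.
  by rewrite size_sort (leq_trans kS cardST) (ltTS k.+1 kS).
by move=> m n mn; apply: leq_ltn_trans.
Qed.

Lemma elt_seq_fset (s : seq nat) i :
  uniq s -> elt (seq_fset tt s) i = nth 0 (sort leq s) i.-1.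
Proof.
move=> us; rewrite /elt; congr nth; apply/(perm_sortP leq_total leq_trans anti_leq).
by rewrite -{2}(undup_id us) seq_fset_perm.
Qed.

Theorem lemma4p11 (S T : {fset nat}) (x : nat) :
  (forall s, s \in S -> 0 < s) ->
  (forall t, t \in T -> 0 < t) ->
  preceq T S ->
  x \in T ->
  preceq (T `\ x) S ->
  forall i, 1 <= i <= #|` S| ->
    elt (tri (T `\ x) S) i <= elt (tri T S) i.
Proof.
move=> _ _ _ xT preceq_TxS i _.
set ss := rev (sort leq S); set B : seq nat := T `\ x.
have eqT : perm_eq T (x :: B).
  apply: uniq_perm; rewrite /= ?fset_uniq ?in_fsetD1 ?eqxx //.
  by move=> t; rewrite inE in_fsetD1; case: eqVneq => [->|].
rewrite /tri !elt_seq_fset ?uniq_tri_rec ?fset_uniq // (perm_tri_rec _ eqT).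
have [[z zx exch]|grow] := tri_rec_cons ss x B; first exact: nth_sort_exchange zx exch.
have := size_tri_rec_leq (x :: B) ss.
by rewrite (perm_size grow) /= (size_tri_rec_preceq preceq_TxS) size_rev size_sort ltnn.
Qed.
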